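(* Let $\Omega\subseteq\mathbb{R}^{m\times m}$, let $d:\Omega^2\to\mathbb{R}$ be a pseudometric, let $n\ge2$ and let $d_F:\Omega^n\to\mathbb{R}$, $d_F(A_1,\dots,A_n)=\min_{B\in\Omega}\sum_{i=1}^n d(A_i,B)$, be the Fermat distance function induced by $d$. Let $\Omega'=\Omega/\!\sim_d$, where $A\sim_d B$ iff $d(A,B)=0$, and write $[A]$ for the equivalence class of $A$. Let $d'_F:\Omega'^n\to\mathbb{R}$ be given by $d'_F([A_1],\dots,[A_n])=d_F(A_1,\dots,A_n)$. Then $d'_F$ is an $n$-metric on $\Omega'$.
   Context: A pseudometric on $\Omega$ is a map $d$ with $d(A,B)\ge0$, $d(A,A)=0$, $d(A,B)=d(B,A)$, $d(A,C)\le d(A,B)+d(B,C)$; $\sim_d$ is then an equivalence relation. For a set $X$, a map $D:X^n\to\mathbb{R}$ is an $n$-metric if for all $x_1,\dots,x_{n+1}\in X$ and all permutations $\sigma$ of $[n]$: $D(x_{1:n})\ge0$; $D(x_{1:n})=0$ iff $x_1=\dots=x_n$; $D(x_{1:n})=D(x_{\sigma(1:n)})$; and $D(x_{1:n})\le\sum_{i=1}^n D(x^i_{1:n,n+1})$, where $x_{1:n}=(x_1,\dots,x_n)$, $x_{\sigma(1:n)}$ has $i$-th entry $x_{\sigma(i)}$, and $x^i_{1:n,n+1}$ is $x_{1:n}$ with $x_i$ replaced by $x_{n+1}$. *)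

From HB Require Import structures.
From mathcomp Require Import all_boot all_order all_algebra all_fingroup.
From mathcomp Require Import reals.
From Stdlib Require Import ClassicalEpsilon.
Set Implicit Arguments. Unset Strict Implicit. Unset Printing Implicit Defensive.
Import Order.TTheory GRing.Theory Num.Theory.
Local Open Scope ring_scope.

Definition is_pseudometric (R : realType) (T : Type) (Om : T -> Prop)
  (d : T -> T -> R) : Prop :=
  forall A B C, Om A -> Om B -> Om C ->
    [/\ 0 <= d A B, d A A = 0, d A B = d B A & d A C <= d A B + d B C].

Definition is_n_metric (R : realType) (X : Type) (n : nat)
  (D : ('I_n -> X) -> R) : Prop :=
  forall (x : 'I_n -> X) (y : X),
    [/\ 0 <= D x,
        D x = 0 <-> (forall i j, x i = x j),
        forall s : 'S_n, D x = D (fun i => x (s i))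
      & D x <= \sum_(i < n) D (fun j => if j == i then y else x j)].

Definition is_fermat_distance (R : realType) (T : Type) (Om : T -> Prop)
  (d : T -> T -> R) (n : nat) (dF : ('I_n -> T) -> R) : Prop :=
  forall A : 'I_n -> T, (forall i, Om (A i)) ->
    (exists2 B, Om B & dF A = \sum_(i < n) d (A i) B) /\
    (forall B, Om B -> dF A <= \sum_(i < n) d (A i) B).

Definition dclass (R : realType) (T : Type) (Om : T -> Prop)
  (d : T -> T -> R) (A : T) : T -> Prop := fun B => Om B /\ d A B = 0.

Definition quot (R : realType) (T : Type) (Om : T -> Prop) (d : T -> T -> R) :=
  {S : T -> Prop | exists A, Om A /\ S = dclass Om d A}.

Definition qrep (R : realType) (T : Type) (Om : T -> Prop) (d : T -> T -> R)
  (S : quot Om d) : T :=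
  proj1_sig (constructive_indefinite_description _ (proj2_sig S)).

Definition quot_fermat (R : realType) (T : Type) (Om : T -> Prop)
  (d : T -> T -> R) (n : nat) (dF : ('I_n -> T) -> R) :
  ('I_n -> quot Om d) -> R :=
  fun S => dF (fun i => qrep (S i)).
Arguments quot_fermat {R T} Om d {n} dF.

From HB Require Import structures.
From mathcomp Require Import all_boot all_order all_algebra all_fingroup.
From mathcomp Require Import reals.
From mathcomp Require Import lra.
From Stdlib Require Import ClassicalEpsilon FunctionalExtensionality.
From Stdlib Require Import PropExtensionality ProofIrrelevance.
Set Implicit Arguments. Unset Strict Implicit. Unset Printing Implicit Defensive.
Import Order.TTheory GRing.Theory Num.Theory.
Local Open Scope ring_scope.

(* If
   d_F(A) = 0, every A_i is at distance 0 from a common minimiser, so all A_i lie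
   in one class; conversely a constant tuple has d_F = 0.  For the simplex
   inequality pick i0 <> i1 (this is where n >= 2 is used) and minimisers B0, B1
   of the tuples with A_i0, resp. A_i1, replaced by C: testing d_F(A) at B0 and
   bounding d(A_i0, B0) <= d(A_i0, B1) + d(B1, C) + d(C, B0) already gives
   d_F(A) <= d_F(A[i0:=C]) + d_F(A[i1:=C]). *)

Definition replace_at (X : Type) (n : nat) (x : 'I_n -> X) (i : 'I_n) (y : X) :
  'I_n -> X := fun j => if j == i then y else x j.

Lemma sum_ge_pair (R : numDomainType) (n : nat) (F : 'I_n -> R) (i0 i1 : 'I_n) :
  (forall i, 0 <= F i) -> i0 != i1 -> F i0 + F i1 <= \sum_i F i.
Proof.
move=> F_ge0 i01; rewrite (bigD1 i0) // (bigD1 i1) 1?eq_sym //= addrA lerDl.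
exact: sumr_ge0.
Qed.

Section Pseudometric.
Variables (R : realType) (T : Type) (Om : T -> Prop) (d : T -> T -> R).
Hypothesis d_pm : is_pseudometric Om d.

Lemma d_ge0 A B : Om A -> Om B -> 0 <= d A B.
Proof. by move=> OA OB; have [] := d_pm OA OB OB. Qed.

Lemma d_refl A : Om A -> d A A = 0.
Proof. by move=> OA; have [] := d_pm OA OA OA. Qed.

Lemma d_sym A B : Om A -> Om B -> d A B = d B A.
Proof. by move=> OA OB; have [] := d_pm OA OB OB. Qed.

Lemma d_triangle A B C : Om A -> Om B -> Om C -> d A C <= d A B + d B C.
Proof. by move=> OA OB OC; have [] := d_pm OA OB OC. Qed.

Lemma d_eq0_trans A B C : Om A -> Om B -> Om C ->
  d A B = 0 -> d B C = 0 -> d A C = 0.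
Proof.
move=> OA OB OC dAB dBC; apply/eqP; rewrite eq_le d_ge0 // andbT.
by rewrite -[0]addr0 -{1}dAB -dBC d_triangle.
Qed.

Lemma dclass_eq A B : Om A -> Om B -> d A B = 0 ->
  dclass Om d A = dclass Om d B.
Proof.
move=> OA OB dAB; apply: functional_extensionality => Z.
apply: propositional_extensionality; split=> -[OZ dZ]; split=> //.
  by apply: (d_eq0_trans OB OA OZ) => //; rewrite d_sym.
exact: (d_eq0_trans OA OB OZ).
Qed.

Lemma qrep_in (S : quot Om d) : Om (qrep S).
Proof. by rewrite /qrep; case: constructive_indefinite_description => A []. Qed.

Lemma qrepE (S : quot Om d) : proj1_sig S = dclass Om d (qrep S).
Proof. by rewrite /qrep; case: constructive_indefinite_description => A []. Qed.

Lemma quot_eq (S1 S2 : quot Om d) : d (qrep S1) (qrep S2) = 0 -> S1 = S2.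
Proof.
move=> d0; apply: eq_sig_hprop => [X p q|]; first exact: proof_irrelevance.
by rewrite !qrepE; apply: dclass_eq => //; apply: qrep_in.
Qed.

Section Fermat.
Variables (n : nat) (dF : ('I_n -> T) -> R).
Hypothesis dF_fermat : is_fermat_distance Om d dF.

Lemma fermat_ge0 A : (forall i, Om (A i)) -> 0 <= dF A.
Proof.
move=> OA; have [[B OB ->] _] := dF_fermat OA.
by apply: sumr_ge0 => i _; apply: d_ge0.
Qed.

Lemma fermat_eq0 A : (forall i, Om (A i)) -> dF A = 0 ->
  forall i j, d (A i) (A j) = 0.
Proof.
move=> OA; have [[B OB ->] _] := dF_fermat OA => sum0 i j.
have dB k : d (A k) B = 0.
  by apply: (psumr_eq0P _ sum0) => // l _; apply: d_ge0.
by apply: (d_eq0_trans (OA i) OB (OA j)); rewrite // d_sym.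
Qed.

Lemma fermat_const A B : Om B -> (forall i, A i = B) -> dF A = 0.
Proof.
move=> OB AB; have OA i : Om (A i) by rewrite AB.
apply/eqP; rewrite eq_le fermat_ge0 // andbT.
have [_ /(_ B OB)] := dF_fermat OA.
by rewrite big1 // => i _; rewrite AB d_refl.
Qed.

Lemma fermat_perm A (s : 'S_n) : (forall i, Om (A i)) ->
  dF (fun i => A (s i)) = dF A.
Proof.
move=> OA; have OAs i : Om (A (s i)) by [].
have sum_perm B : \sum_i d (A (s i)) B = \sum_i d (A i) B.
  by rewrite [RHS](reindex_perm s).
have [[B OB dFA] dFA_le] := dF_fermat OA.
have [[Bs OBs dFAs] dFAs_le] := dF_fermat OAs.
apply/eqP; rewrite eq_le; apply/andP; split.
  by rewrite [X in _ <= X]dFA -sum_perm dFAs_le.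
by rewrite dFAs sum_perm dFA_le.
Qed.

Lemma fermat_replace_le A C i0 i1 :
  (forall i, Om (A i)) -> Om C -> i0 != i1 ->
  dF A <= dF (replace_at A i0 C) + dF (replace_at A i1 C).
Proof.
move=> OA OC i01.
have OAC i j : Om (replace_at A i C j) by rewrite /replace_at; case: ifP.
have [[B0 OB0 ->] _] := dF_fermat (OAC i0).
have [[B1 OB1 ->] _] := dF_fermat (OAC i1).
have dFA_le := (dF_fermat OA).2 B0 OB0.
rewrite (bigD1 i0) //= in dFA_le.
have sum0 : \sum_i d (replace_at A i0 C i) B0 =
            d C B0 + \sum_(i | i != i0) d (A i) B0.
  rewrite (bigD1 i0) //= /replace_at eqxx; congr (_ + _).
  by apply: eq_bigr => i /negbTE ->.
have pair : d (replace_at A i1 C i1) B1 + d (replace_at A i1 C i0) B1 <=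
            \sum_i d (replace_at A i1 C i) B1.
  by apply: sum_ge_pair => [i|]; [apply: d_ge0 | rewrite eq_sym].
rewrite /replace_at eqxx (negbTE i01) in pair.
have tri1 := d_triangle (OA i0) OB1 OB0.
have tri2 := d_triangle OB1 OC OB0.
rewrite (d_sym OB1 OC) in tri2.
rewrite sum0; lra.
Qed.

Lemma fermat_le_sum_replace A C : (2 <= n)%N -> (forall i, Om (A i)) -> Om C ->
  dF A <= \sum_i dF (replace_at A i C).
Proof.
move=> n_ge2 OA OC.
pose i0 : 'I_n := Ordinal (ltnW n_ge2); pose i1 : 'I_n := Ordinal n_ge2.
apply: le_trans (fermat_replace_le OA OC (_ : i0 != i1)) _ => //.
apply: sum_ge_pair => // i; apply: fermat_ge0 => j.
by rewrite /replace_at; case: ifP.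
Qed.

End Fermat.
End Pseudometric.

Theorem theorem3 (R : realType) (m : nat) (Om : 'M[R]_m -> Prop)
  (d : 'M[R]_m -> 'M[R]_m -> R) (n : nat) (dF : ('I_n -> 'M[R]_m) -> R) :
  is_pseudometric Om d -> (2 <= n)%N -> is_fermat_distance Om d dF ->
  is_n_metric (quot_fermat Om d dF).
Proof.
move=> d_pm n_ge2 dF_fermat x y; rewrite /quot_fermat.
have Ox i : Om (qrep (x i)) by apply: qrep_in.
split.
- exact: (fermat_ge0 d_pm dF_fermat Ox).
- split=> [dF0 i j | x_const].
    exact/(quot_eq d_pm)/(fermat_eq0 d_pm dF_fermat Ox).
  pose i0 : 'I_n := Ordinal (ltnW n_ge2).
  by apply: (fermat_const d_pm dF_fermat (Ox i0)) => i; rewrite (x_const i i0).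
- move=> s; exact: (esym (fermat_perm dF_fermat s Ox)).
- rewrite (eq_bigr (fun i => dF (replace_at (fun j => qrep (x j)) i (qrep y)))).
    exact: (fermat_le_sum_replace d_pm dF_fermat n_ge2 Ox (qrep_in y)).
  move=> i _; congr dF; apply: functional_extensionality => j.
  by rewrite /replace_at; case: ifP.
Qed.
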